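(* Let $\Sigma$ be a finite alphabet with $|\Sigma|\ge 2$, and let $\delta$ be a uniform Hamming compatible metric on $\Sigma^*$. Then $\delta(u,v)\ge d_2(u,v)$ for all $u,v\in\Sigma^*$. In particular, $\delta(u,v)\to\infty$ as $|l(u)-l(v)|\to\infty$.
   Context: For a finite alphabet $\Sigma$, $\Sigma_n$ denotes the set of words of length $n$ over $\Sigma$, $\Sigma^*=\bigcup_{n\ge 0}\Sigma_n$ is the set of all finite words, $l(u)$ is the length of $u$, and $\varepsilon$ is the empty word. $H$ denotes the usual Hamming distance between two words of equal length (the number of positions where they differ). The truncated Hamming function is defined for arbitrary $u,v\in\Sigma^*$ as follows: if $l(u)\ge l(v)$, let $\underline{u}$ be the prefix of $u$ of length $l(v)$ and $\underline{v}=v$ (symmetrically if $l(v)\ge l(u)$), and $H(\underline{u},\underline{v})$ is the Hamming distance of these two equal-length words. All metrics are integer-valued. A metric $\delta$ on $\Sigma^*$ is Hamming compatible if $\delta(u,v)=H(u,v)$ whenever $l(u)=l(v)$. Define $d_2(u,v)=H(\underline{u},\underline{v})+\lceil |l(u)-l(v)|/2\rceil$. Two words $u,v$ of the same length $n$ are Hamming opposites if $H(u,v)=n$. For a Hamming compatible metric $\delta$ put $\gamma(u,v)=\delta(u,v)-H(\underline{u},\underline{v})$. $\delta$ is called uniform if for every $n$ and every pair of Hamming opposites $u,v\in\Sigma_n$ one has $\gamma(u,w)=\gamma(v,w)$ for all $w\in\Sigma^*$. *)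

From mathcomp Require Import all_boot all_order all_algebra.
Set Implicit Arguments. Unset Strict Implicit. Unset Printing Implicit Defensive.
Import GRing.Theory Num.Theory.

Section Words.
Variable Sigma : finType.

Definition hamming (u v : seq Sigma) : nat :=
  count (fun p : Sigma * Sigma => p.1 != p.2) (zip u v).

(* Truncated Hamming function: compare the prefix of the longer word of the
   length of the shorter one with the shorter word. *)
Definition trunc_hamming (u v : seq Sigma) : nat :=
  hamming (take (size v) u) (take (size u) v).

Definition len_diff (u v : seq Sigma) : nat :=
  (size u - size v) + (size v - size u).

(* d_2(u,v) = H(u_,v_) + ceil(|l(u)-l(v)|/2); uphalf k = ceil(k/2). *)
Definition d2 (u v : seq Sigma) : nat := trunc_hamming u v + uphalf (len_diff u v).

Definition is_metric (delta : seq Sigma -> seq Sigma -> nat) : Prop :=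
  (forall u v, delta u v = 0%N <-> u = v) /\
  (forall u v, delta u v = delta v u) /\
  (forall u v w, (delta u w <= delta u v + delta v w)%N).

Definition hamming_compatible (delta : seq Sigma -> seq Sigma -> nat) : Prop :=
  forall u v, size u = size v -> delta u v = hamming u v.

Definition hamming_opposites (n : nat) (u v : seq Sigma) : Prop :=
  size u = n /\ size v = n /\ hamming u v = n.

Definition gamma (delta : seq Sigma -> seq Sigma -> nat) (u v : seq Sigma) : int :=
  (delta u v)%:Z - (trunc_hamming u v)%:Z.

Definition uniform (delta : seq Sigma -> seq Sigma -> nat) : Prop :=
  forall n (u v : seq Sigma), hamming_opposites n u v ->
    forall w, gamma delta u w = gamma delta v w.

End Words.

(* Let |u| <= |v|.  Using a second letter for every letter (|Sigma| >= 2) we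
   build a word w, the "antipode of v relative to u", which is a Hamming
   opposite of v and which on the first |u| positions agrees with u exactly
   where v does not; hence H(u_,v_) + H(u_,w_) = |u|.  Uniformity applied to
   the opposites v, w and the word u gives
       delta(u,w) - H(u_,w_) = delta(u,v) - H(u_,v_),
   and the triangle inequality through u gives |v| = delta(v,w) <=
   delta(v,u) + delta(u,w).  Eliminating delta(u,w) and H(u_,w_) yields
   |v| - |u| <= 2 (delta(u,v) - H(u_,v_)), i.e. d_2(u,v) <= delta(u,v). *)
From mathcomp Require Import all_boot all_order all_algebra.
From mathcomp Require Import zify.

Set Implicit Arguments.
Unset Strict Implicit.
Unset Printing Implicit Defensive.

Section Words.
Variable Sigma : finType.
Implicit Types (u v : seq Sigma) (a x : Sigma).

Lemma hamming_cons a x u v :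
  hamming (a :: u) (x :: v) = (a != x) + hamming u v.
Proof. by []. Qed.

Lemma hamming_sym u v : hamming u v = hamming v u.
Proof. by elim: u v => [|a u IH] [|x v] //; rewrite !hamming_cons IH eq_sym. Qed.

Lemma trunc_hamming_sym u v : trunc_hamming u v = trunc_hamming v u.
Proof. by rewrite /trunc_hamming hamming_sym. Qed.

Lemma len_diff_sym u v : len_diff u v = len_diff v u.
Proof. by rewrite /len_diff addnC. Qed.

Lemma d2_sym u v : d2 u v = d2 v u.
Proof. by rewrite /d2 trunc_hamming_sym len_diff_sym. Qed.

Lemma trunc_hamming_le u v :
  size u <= size v -> trunc_hamming u v = hamming u (take (size u) v).
Proof. by move=> Huv; rewrite /trunc_hamming take_oversize. Qed.

Definition companion x : Sigma :=
  if [pick y | y != x] is Some y then y else x.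

Lemma companion_neq x : 1 < #|Sigma| -> companion x != x.
Proof.
move=> card_gt1; rewrite /companion; case: pickP => [y //|no_other].
suff : #|Sigma| <= 1 by rewrite leqNgt card_gt1.
apply/fintype_le1P => a b.
by rewrite (eqP (negbFE (no_other a))) (eqP (negbFE (no_other b))).
Qed.

Section Antipode.
Hypothesis card_gt1 : 1 < #|Sigma|.

Definition flip a x : Sigma := if a != x then a else companion x.

Lemma flip_neq a x : flip a x != x.
Proof. by rewrite /flip; case: ifP => // _; apply: companion_neq. Qed.

Lemma flip_split a x : (a != x) + (a != flip a x) = 1.
Proof.
rewrite /flip; case: (a =P x) => [->|_] /=.
  by rewrite eq_sym companion_neq.
by rewrite eqxx.
Qed.

Fixpoint antipode u v : seq Sigma :=
  match u, v with
  | a :: u', x :: v' => flip a x :: antipode u' v'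
  | [::], v => map companion v
  | _ :: _, [::] => [::]
  end.

Lemma size_antipode u v : size (antipode u v) = size v.
Proof. by elim: u v => [|a u IH] [|x v] //=; rewrite ?size_map ?IH. Qed.

Lemma hamming_antipode u v : hamming v (antipode u v) = size v.
Proof.
elim: u v => [|a u IH] v.
  by elim: v => [|x v IHv] //=; rewrite hamming_cons IHv eq_sym companion_neq.
by case: v => [|x v] //=; rewrite hamming_cons IH eq_sym flip_neq.
Qed.

Lemma antipode_opposite u v : hamming_opposites (size v) v (antipode u v).
Proof. by rewrite /hamming_opposites size_antipode hamming_antipode. Qed.

Lemma trunc_hamming_antipode u v : size u <= size v ->
  trunc_hamming u v + trunc_hamming u (antipode u v) = size u.
Proof.
move=> Huv; rewrite !trunc_hamming_le ?size_antipode //.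
elim: u v Huv => [|a u IH] [|x v] //= Huv.
by rewrite !hamming_cons addnACA flip_split IH.
Qed.

End Antipode.
End Words.

Section UniformMetric.
Variables (Sigma : finType) (delta : seq Sigma -> seq Sigma -> nat).
Hypotheses (card_gt1 : 1 < #|Sigma|) (delta_metric : is_metric delta).
Hypotheses (delta_compat : hamming_compatible delta) (delta_unif : uniform delta).

(* The main estimate when u is the shorter word: uniformity on the opposites
   v, antipode u v, together with the triangle inequality through u. *)
Lemma d2_le_delta_shorter (u v : seq Sigma) :
  size u <= size v -> d2 u v <= delta u v.
Proof.
case: delta_metric => [_ [delta_sym delta_tri]] Huv.
have opp_vw := antipode_opposite card_gt1 u v.
have split_u := trunc_hamming_antipode card_gt1 Huv.
set w := antipode u v in opp_vw split_u.
have gamma_eq : delta u w + trunc_hamming u v = delta u v + trunc_hamming u w.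
  (* gamma(v,u) = gamma(w,u), written in nat *)
  have := delta_unif opp_vw u.
  by rewrite /gamma !(trunc_hamming_sym _ u) !(delta_sym _ u); lia.
have tri : size v <= delta u v + delta u w.
  have <- : delta v w = size v.
    by rewrite delta_compat ?size_antipode ?hamming_antipode.
  by rewrite (delta_sym u v); apply: delta_tri.
rewrite /d2.
have -> : len_diff u v = size v - size u by rewrite /len_diff; lia.
have : uphalf (size v - size u) <= delta u v - trunc_hamming u v.
  by rewrite leq_uphalf_double -mul2n; lia.
lia.
Qed.

Lemma d2_le_delta (u v : seq Sigma) : d2 u v <= delta u v.
Proof.
case: delta_metric => [_ [delta_sym _]].
case: (leqP (size u) (size v)) => [|/ltnW] Huv; first exact: d2_le_delta_shorter.
by rewrite d2_sym delta_sym; apply: d2_le_delta_shorter.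
Qed.

End UniformMetric.

Theorem theorem4p9 (Sigma : finType) (delta : seq Sigma -> seq Sigma -> nat) :
  (2 <= #|Sigma|)%N ->
  is_metric delta -> hamming_compatible delta -> uniform delta ->
  (forall u v : seq Sigma, (d2 u v <= delta u v)%N) /\
  (forall N : nat, exists M : nat, forall u v : seq Sigma,
      (M <= len_diff u v)%N -> (N <= delta u v)%N).
Proof.
move=> card_gt1 delta_metric delta_compat delta_unif.
have d2_le := d2_le_delta card_gt1 delta_metric delta_compat delta_unif.
split=> // N; exists N.*2 => u v len_ge.
apply: leq_trans (d2_le u v); apply: leq_trans (leq_addl _ _).
by rewrite geq_uphalf_double (leq_trans len_ge).
Qed.
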